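(* Let $G$ be a graph with $n$ vertices and maximum degree $\Delta$. Then for every positive integer $q\leq n-\Delta-1$, $\eta(G\lor K_q)=\max\{\eta(G),q\}$.
   Context: All graphs are finite, simple and undirected. $K_q$ is the complete graph on $q$ vertices. For disjoint graphs $G_1,G_2$, the join $G_1\lor G_2$ has vertex set $V(G_1)\cup V(G_2)$ and edge set $E(G_1)\cup E(G_2)\cup\{(u,v):u\in V(G_1),v\in V(G_2)\}$. For a vertex $v$, $N(v)$ is its set of neighbours. For a positive integer $k$, $[k]=\{1,\dots,k\}$. For a labeling $f:V(G)\to[k]$ and $S\subseteq V(G)$, $f(S)=\sum_{u\in S}f(u)$. A labeling $f:V(G)\to[k]$ is an additive $k$-coloring if $f(N(u))\neq f(N(v))$ for every edge $(u,v)$ of $G$. The additive chromatic number $\eta(G)$ is the least $k$ for which $G$ has an additive $k$-coloring. *)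

From mathcomp Require Import all_boot.
Set Implicit Arguments. Unset Strict Implicit. Unset Printing Implicit Defensive.

Definition simple_graph (V : finType) (e : rel V) : Prop :=
  symmetric e /\ irreflexive e.

Definition deg (V : finType) (e : rel V) (v : V) : nat := #|[set u | e v u]|.
Definition max_deg (V : finType) (e : rel V) : nat := \max_(v : V) deg e v.

Definition join_K (V : finType) (e : rel V) (q : nat) : rel (V + 'I_q)%type :=
  fun x y => match x, y with
             | inl a, inl b => e a b
             | inr i, inr j => i != j
             | _, _ => true
             end.

Arguments join_K {V} e q.

Definition nsum (V : finType) (e : rel V) (f : V -> nat) (v : V) : nat :=
  \sum_(u | e v u) f u.

Definition additive_coloring (V : finType) (e : rel V) (k : nat) (f : V -> nat) : Prop :=
  (forall v, 1 <= f v <= k) /\ (forall u v, e u v -> nsum e f u <> nsum e f v).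

Definition additive_colorable (V : finType) (e : rel V) (k : nat) : Prop :=
  exists f : V -> nat, additive_coloring e k f.

Definition is_eta (V : finType) (e : rel V) (k : nat) : Prop :=
  additive_colorable e k /\ (forall j, additive_colorable e j -> k <= j).

(* In G ∨ K_q the clique vertices see every other vertex, so the neighbourhood
   sum of a clique vertex is the total label sum minus its own label: the q
   clique labels must be pairwise distinct, whence q <= eta, and restricting to
   G gives eta(G) <= eta since the G-vertices all gain the same summand.
   Conversely, label G optimally and the clique by 1, ..., q.  A G-vertex v and
   a clique vertex with label i can only collide if the labels of the
   non-neighbours of v in G add up to i <= q; but v has at least
   n - Δ >= q + 1 non-neighbours, each with a positive label. *)

From mathcomp Require Import all_boot.
From mathcomp Require Import zify.

Set Implicit Arguments.
Unset Strict Implicit.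

Section JoinNeighbourSums.
Variables (V : finType) (e : rel V) (q : nat) (f : (V + 'I_q)%type -> nat).

Lemma nsum_join_inl v :
  nsum (join_K e q) f (inl v) =
  nsum e (fun a => f (inl a)) v + \sum_(i : 'I_q) f (inr i).
Proof. by rewrite /nsum big_sumType. Qed.

Lemma nsum_join_inr i :
  nsum (join_K e q) f (inr i) + f (inr i) =
  \sum_(a : V) f (inl a) + \sum_(j : 'I_q) f (inr j).
Proof.
rewrite [RHS](_ : _ = \sum_(y : (V + 'I_q)%type) f y); last by rewrite big_sumType.
rewrite /nsum [RHS](bigID (join_K e q (inr i))) /=.
congr (_ + _); rewrite (eq_bigl (pred1 (inr i))) ?big_pred1_eq // => -[a|j] //=.
by rewrite negbK; apply/eqP/eqP => [->|[->]].
Qed.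

Lemma eq_nsum_join_inr i j :
  (nsum (join_K e q) f (inr i) == nsum (join_K e q) f (inr j)) =
  (f (inr i) == f (inr j)).
Proof.
have := nsum_join_inr i; have := nsum_join_inr j => sum_j sum_i.
by apply/eqP/eqP; lia.
Qed.

End JoinNeighbourSums.

Lemma deg_le_max_deg (V : finType) (e : rel V) (v : V) : deg e v <= max_deg e.
Proof. exact: (@leq_bigmax _ (fun v => deg e v) v). Qed.

Lemma card_le_sum_nonneighbours (V : finType) (e : rel V) (f : V -> nat) v :
  (forall a, 0 < f a) -> #|V| <= max_deg e + \sum_(a | ~~ e v a) f a.
Proof.
move=> f_pos; rewrite -(cardC (e v)); apply: leq_add.
  by have := deg_le_max_deg e v; rewrite /deg cardsE.
by rewrite -sum1_card; apply: leq_sum => a _; exact: f_pos.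
Qed.

Lemma card_ord_le_of_inj_labels q k (h : 'I_q -> nat) :
  injective h -> (forall i, 0 < h i <= k) -> q <= k.
Proof.
move=> h_inj h_range.
have lt_k i : (h i).-1 < k by case/andP: (h_range i) => *; lia.
have inj : injective (fun i => Ordinal (lt_k i)).
  move=> i j /(congr1 val) /= eq_pred; apply: h_inj.
  by case/andP: (h_range i); case/andP: (h_range j) => *; lia.
by have := leq_card _ inj; rewrite !card_ord.
Qed.

Section JoinColorings.
Variables (V : finType) (e : rel V) (q k : nat).

Lemma additive_coloring_join_inl (g : (V + 'I_q)%type -> nat) :
  additive_coloring (join_K e q) k g -> additive_coloring e k (fun a => g (inl a)).
Proof.
case=> g_range g_add; split=> [a|a b ab eq_ab]; first exact: g_range.
by apply: (g_add (inl a) (inl b) ab); rewrite !nsum_join_inl eq_ab.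
Qed.

Lemma additive_coloring_join_clique (g : (V + 'I_q)%type -> nat) :
  additive_coloring (join_K e q) k g -> q <= k.
Proof.
case=> g_range g_add; apply: (@card_ord_le_of_inj_labels _ _ (fun i => g (inr i))).
  move=> i j eq_ij; apply/eqP/negPn/negP => ij.
  by apply: (g_add (inr i) (inr j) ij); apply/eqP; rewrite eq_nsum_join_inr eq_ij.
by move=> i; exact: g_range.
Qed.

Definition join_label (f : V -> nat) (x : (V + 'I_q)%type) : nat :=
  match x with inl a => f a | inr i => i.+1 end.

Lemma additive_coloring_join (f : V -> nat) :
  q + max_deg e + 1 <= #|V| -> additive_coloring e k f ->
  additive_coloring (join_K e q) (maxn k q) (join_label f).
Proof.
move=> card_V [f_range f_add]; split.
  case=> [a|i] /=; rewrite leq_max; last by rewrite ltn_ord orbT.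
  by case/andP: (f_range a) => -> ->.
have sum_inl v : nsum e (fun a => join_label f (inl a)) v = nsum e f v by [].
have nsum_inl_neq_inr v (i : 'I_q) :
    nsum (join_K e q) (join_label f) (inl v) <> nsum (join_K e q) (join_label f) (inr i).
  move=> eq_vi; have := nsum_join_inr e (join_label f) i.
  rewrite -eq_vi nsum_join_inl sum_inl /= (bigID (e v)) /= -/(nsum e f v) => sums.
  have := @card_le_sum_nonneighbours _ e f v (fun a => proj1 (andP (f_range a))).
  have := ltn_ord i; lia.
case=> [a|i] [b|j] xy.
- by rewrite !nsum_join_inl !sum_inl => eq_ab; apply: (f_add a b xy); lia.
- exact: nsum_inl_neq_inr.
- by move/esym; exact: nsum_inl_neq_inr.
- move/eqP; rewrite eq_nsum_join_inr /= eqSS => /eqP/val_inj eq_ij.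
  by move: xy; rewrite eq_ij /= eqxx.
Qed.

End JoinColorings.

Theorem mainTheorem4 (V : finType) (e : rel V) (q etaG : nat) :
  simple_graph e ->
  0 < q ->
  q + max_deg e + 1 <= #|V| ->
  is_eta e etaG ->
  is_eta (join_K e q) (maxn etaG q).
Proof.
move=> _ _ card_V [[f f_col] etaG_min]; split.
  by exists (join_label f); exact: additive_coloring_join.
move=> k [g g_col]; rewrite geq_max; apply/andP; split.
  by apply: etaG_min; exists (fun a => g (inl a)); exact: additive_coloring_join_inl.
exact: additive_coloring_join_clique g_col.
Qed.
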